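(* Let $\mathcal{X}\subseteq\mathbb{R}^d$ be nonempty, closed and convex, let $f:\mathbb{R}^d\to\mathbb{R}$ be differentiable, $L$-smooth and strictly convex, and assume $\mathcal{X}_\star:=\operatorname{arg\,min}_{x\in\mathcal{X}} f(x)$ is nonempty. Let $x_0\in\mathcal{X}$, $x_\star\in\mathcal{X}_\star$, and let $\{x_k\}_{k\ge0}$ be generated by the Local LMO iteration $x_{k+1}\in\operatorname{arg\,min}_{z\in\mathcal{X}\cap\mathcal{B}(x_k,t_k)}\langle\nabla f(x_k),z\rangle$ with radii $t_k=\|\nabla f(x_k)-\nabla f(x_\star)\|/L$. Then for every $K\ge1$, $$\min_{0\le k\le K-1}\|\nabla f(x_k)-\nabla f(x_\star)\|^2\le\frac1K\sum_{k=0}^{K-1}\|\nabla f(x_k)-\nabla f(x_\star)\|^2\le\frac{L^2\|x_0-x_\star\|^2}{K}.$$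
   Context: $\|\cdot\|$ is the Euclidean norm, $\mathcal{B}(x,t):=\{y:\|y-x\|\le t\}$. $f$ is $L$-smooth if $\|\nabla f(x)-\nabla f(y)\|\le L\|x-y\|$ for all $x,y$. *)

From HB Require Import structures.
From mathcomp Require Import all_boot all_order all_algebra.
From mathcomp Require Import all_classical all_reals all_analysis.
Set Implicit Arguments. Unset Strict Implicit. Unset Printing Implicit Defensive.
Import Order.TTheory GRing.Theory Num.Theory.
Import numFieldNormedType.Exports.
Local Open Scope classical_set_scope.
Local Open Scope ring_scope.

Section Defs.
Variables (R : realType) (d : nat).

Definition dotp (u v : 'rV[R]_d) : R := \sum_(i < d) u 0 i * v 0 i.
Definition enorm (u : 'rV[R]_d) : R := Num.sqrt (dotp u u).

Definition eball (x : 'rV[R]_d) (t : R) : set 'rV[R]_d :=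
  [set y | enorm (y - x) <= t].

Definition grad (f : 'rV[R]_d -> R) (x : 'rV[R]_d) : 'rV[R]_d :=
  \row_(i < d) ('D_(delta_mx 0 i) f x).

Definition strictly_convex (f : 'rV[R]_d -> R) : Prop :=
  forall x y (t : R), x != y -> 0 < t < 1 ->
    f (t *: x + (1 - t) *: y) < t * f x + (1 - t) * f y.

Definition L_smooth (L : R) (f : 'rV[R]_d -> R) : Prop :=
  forall x y, enorm (grad f x - grad f y) <= L * enorm (x - y).

Definition argmin_on (S : set 'rV[R]_d) (g : 'rV[R]_d -> R) : set 'rV[R]_d :=
  [set z | S z /\ forall y, S y -> g z <= g y].

End Defs.

From mathcomp Require Import all_boot all_order all_algebra.
From mathcomp Require Import all_classical all_reals all_analysis.
From mathcomp Require Import ring lra.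
Set Implicit Arguments. Unset Strict Implicit. Unset Printing Implicit Defensive.
Import Order.TTheory GRing.Theory Num.Theory.
Import numFieldNormedType.Exports.
Local Open Scope classical_set_scope.
Local Open Scope ring_scope.

(* Co-coercivity of the gradient of a convex L-smooth function,
   [<∇f x - ∇f y, x - y> >= |∇f x - ∇f y|^2 / L], makes every Local LMO step
   contract the squared distance to [x⋆] by [t_k^2]. Either [x_{k+1}] is at
   least as good as [x⋆] for the linear objective, and then co-coercivity and
   the optimality of [x⋆] pin [x_{k+1} = x_k - (∇f x_k - ∇f x⋆) / L]; or [x⋆]
   is strictly better, so the segment from [x_{k+1}] to [x⋆] leaves the ball
   at once, which is a power-of-a-point inequality. The contractions telescope
   to [sum_k L^2 t_k^2 <= L^2 |x_0 - x⋆|^2], and a minimum is at most the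
   mean. *)

Section Euclidean.
Variables (R : realType) (d : nat).
Implicit Types (u v w : 'rV[R]_d) (c t : R).
Local Notation dot := (@dotp R d).

Lemma dotpC u v : dot u v = dot v u.
Proof. by apply: eq_bigr => i _; rewrite mulrC. Qed.

Lemma dotpDl u v w : dot (u + v) w = dot u w + dot v w.
Proof. by rewrite /dotp -big_split; apply: eq_bigr => i _; rewrite !mxE mulrDl. Qed.

Lemma dotpZl c u w : dot (c *: u) w = c * dot u w.
Proof. by rewrite /dotp mulr_sumr; apply: eq_bigr => i _; rewrite !mxE mulrA. Qed.

Lemma dotpNl u w : dot (- u) w = - dot u w.
Proof. by rewrite -scaleN1r dotpZl mulN1r. Qed.

Lemma dotpBl u v w : dot (u - v) w = dot u w - dot v w.
Proof. by rewrite dotpDl dotpNl. Qed.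

Lemma dotpDr u v w : dot w (u + v) = dot w u + dot w v.
Proof. by rewrite dotpC dotpDl !(dotpC w). Qed.

Lemma dotpZr c u w : dot w (c *: u) = c * dot w u.
Proof. by rewrite dotpC dotpZl dotpC. Qed.

Lemma dotpNr u w : dot w (- u) = - dot w u.
Proof. by rewrite dotpC dotpNl dotpC. Qed.

Lemma dotpBr u v w : dot w (u - v) = dot w u - dot w v.
Proof. by rewrite dotpDr dotpNr. Qed.

Lemma dotpp_ge0 u : 0 <= dot u u.
Proof. by apply: sumr_ge0 => i _; rewrite -expr2 sqr_ge0. Qed.

Lemma dotpp_eq0 u : (dot u u == 0) = (u == 0).
Proof.
apply/idP/eqP => [|->]; last by rewrite /dotp big1 // => i _; rewrite mxE mul0r.
rewrite psumr_eq0 => [/allP u0|i _]; last by rewrite -expr2 sqr_ge0.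
apply/rowP => i; rewrite mxE.
by have := u0 i (mem_index_enum i); rewrite -expr2 sqrf_eq0 => /eqP.
Qed.

Lemma enorm_ge0 u : 0 <= enorm u.
Proof. exact: sqrtr_ge0. Qed.

Lemma enorm_sqr u : enorm u ^+ 2 = dot u u.
Proof. by rewrite /enorm sqr_sqrtr // dotpp_ge0. Qed.

Lemma enorm_le_sqr t u : 0 <= t -> (enorm u <= t) = (dot u u <= t ^+ 2).
Proof. by move=> t0; rewrite -enorm_sqr ler_sqr ?nnegrE ?enorm_ge0. Qed.

Lemma dotp_sqrDZ c u v :
  dot (u + c *: v) (u + c *: v) = dot u u + 2 * c * dot u v + c ^+ 2 * dot v v.
Proof. by rewrite !(dotpDl, dotpDr, dotpZl, dotpZr) (dotpC v u); ring. Qed.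

Lemma dotp_sqrBZ c u v :
  dot (u - c *: v) (u - c *: v) = dot u u - 2 * c * dot u v + c ^+ 2 * dot v v.
Proof. by rewrite -scaleNr dotp_sqrDZ sqrrN; ring. Qed.

Lemma dotp_sqrB u v : dot (u - v) (u - v) = dot u u - 2 * dot u v + dot v v.
Proof. by rewrite -[v in u - v]scale1r dotp_sqrBZ; ring. Qed.

Lemma dotp_amgm c u v : 2 * c * dot u v <= dot u u + c ^+ 2 * dot v v.
Proof. by have := dotpp_ge0 (u - c *: v); rewrite dotp_sqrBZ; lra. Qed.

Lemma cauchy_schwarz_eq c h e : 0 <= c ->
  dot e e <= c ^+ 2 * dot h h -> c * dot h h <= dot h e -> e = c *: h.
Proof.
move=> c0 ee he; apply/eqP; rewrite -subr_eq0 -dotpp_eq0 eq_le dotpp_ge0 andbT.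
rewrite dotp_sqrBZ dotpC.
have : c * (c * dot h h) <= c * dot h e by rewrite ler_wpM2l.
lra.
Qed.

Lemma segment_exit_ball t u w : dot u u <= t ^+ 2 ->
  (forall l, 0 < l <= 1 -> t ^+ 2 < dot (u + l *: (w - u)) (u + l *: (w - u))) ->
  dot (u - w) (u - w) <= dot w w - t ^+ 2.
Proof.
move=> uu exit_ball; rewrite leNgt; apply/negP => far.
set E := t ^+ 2 + dot u u - 2 * dot u w.
set C := dot (w - u) (w - u).
have E0 : 0 < E by rewrite /E; move: far; rewrite dotp_sqrB; lra.
have C0 : 0 <= C by exact: dotpp_ge0.
(* for [l (E + C) = E], [|u + l (w - u)|^2 = t^2 - (1 - l) (t^2 - |u|^2) - l^2 E] *)
set l := E / (E + C).
have lEC : l * (E + C) = E by rewrite mulfVK // gt_eqF //; lra.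
have l0 : 0 < l by rewrite divr_gt0 //; lra.
have l1 : l <= 1 by rewrite ler_pdivrMr; lra.
have := exit_ball l; rewrite l0 l1 => /(_ isT); apply/negP; rewrite -leNgt.
rewrite dotp_sqrDZ -/C dotpBr.
have : 0 <= (t ^+ 2 - dot u u) * (1 - l) + l ^+ 2 * E.
  by rewrite addr_ge0 // mulr_ge0 ?sqr_ge0 //; lra.
rewrite /E in lEC *; nra.
Qed.

End Euclidean.

Section RealFunctions.
Variable R : realType.
Implicit Types (h dh : R -> R) (a b D M : R).

Lemma derive0_le_slope h D M : is_derive (0 : R) (1 : R) h D ->
  (forall s, 0 < s < 1 -> h s - h 0 <= M * s) -> D <= M.
Proof.
move=> [dh <-] slope; apply: (cvgr_to_le (cvg_dnbhs_at_right dh)).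
near=> r.
have r0 : 0 < r by near: r; exact: nbhs_right_gt.
have r1 : r < 1 by near: r; exact: nbhs_right_lt.
rewrite /= scaler1 addr0 /GRing.scale /= ler_pdivrMl // mulrC.
by apply: slope; rewrite r0 r1.
Unshelve. all: by end_near.
Qed.

Lemma derive0_ge_slope h D M : is_derive (0 : R) (1 : R) h D ->
  (forall s, 0 < s < 1 -> M * s <= h s - h 0) -> M <= D.
Proof.
move=> /is_deriveN dh slope; rewrite -lerN2.
apply: (derive0_le_slope dh) => s s01; rewrite !fctE mulNr; have := slope s s01; lra.
Qed.

Lemma increment_le_of_derive_affine h dh a b :
  (forall s, is_derive s (1 : R) h (dh s)) -> (forall s, 0 < s < 1 -> dh s <= a + b * s) ->
  h 1 - h 0 <= a + b / 2.
Proof.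
move=> hd dh_le.
pose psi s := h s - a * s - b / 2 * s ^+ 2.
have psid s : is_derive s (1 : R) psi (dh s - a - b * s).
  by apply: is_derive_eq; rewrite /GRing.scale /= !mulr1; field.
have cont := derivable_within_continuous (i := `[0, 1]) (fun s _ => (psid s).(ex_derive)).
have [c /[!in_itv]/= /andP[c0 c1] ] := MVT ltr01 (fun s _ => psid s) cont.
have := dh_le c; rewrite c0 c1 /psi => /(_ isT).
rewrite expr1n expr0n /= !mulr0 !mulr1 !subr0; lra.
Qed.

End RealFunctions.

Section Averages.
Variable R : realFieldType.
Implicit Types a b : nat -> R.

Lemma sum_le_telescope a b n : (forall k, a k <= b k - b k.+1) ->
  \sum_(k < n) a k <= b 0%N - b n.
Proof.
move=> ab; elim: n => [|n IHn]; first by rewrite big_ord0 subrr.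
by rewrite big_ord_recr /=; have := ab n; lra.
Qed.

Lemma bigmin_le_mean a K : (0 < K)%N ->
  \big[Num.min/a 0%N]_(k < K) a k <= K%:R^-1 * \sum_(k < K) a k.
Proof.
move=> K0; rewrite ler_pdivlMl ?ltr0n // -[K in K%:R](card_ord K) mulr_natl -sumr_const.
by apply: ler_sum => k _; exact: bigmin_le.
Qed.

End Averages.

Definition convex_fun (R : realType) (d : nat) (f : 'rV[R]_d -> R) : Prop :=
  forall x y (t : R), 0 < t < 1 -> f (t *: x + (1 - t) *: y) <= t * f x + (1 - t) * f y.

Lemma strictly_convex_convex (R : realType) (d : nat) (f : 'rV[R]_d -> R) :
  strictly_convex f -> convex_fun f.
Proof.
move=> fc x y t t01; have [->|xy] := eqVneq x y; last exact/ltW/fc.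
by rewrite -scalerDl addrC subrK scale1r -mulrDl addrC subrK mul1r.
Qed.

Section Segments.
Variables (R : numDomainType) (V : lmodType R).
Implicit Types (x y : V) (t : R).

Lemma segment_pointE x y t : x + t *: (y - x) = t *: y + (1 - t) *: x.
Proof. by rewrite scalerBr scalerBl scale1r addrCA addrA. Qed.

Lemma convex_set_comb (X : set V) x y t :
  convex_set X -> X x -> X y -> 0 <= t <= 1 -> X (t *: x + (1 - t) *: y).
Proof.
move=> cX Xx Xy /andP[t0 t1].
by have /(_ _ _)/set_mem := cX x y (Itv01 t0 t1); apply; exact/mem_set.
Qed.

End Segments.

Section Gradient.
Variables (R : realType) (d : nat) (f : 'rV[R]_d -> R).
Hypothesis fd : forall x, differentiable f x.
Local Notation g := (grad f).
Implicit Types (x y v : 'rV[R]_d).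

Lemma derive_grad x v : 'D_v f x = dotp (g x) v.
Proof.
rewrite deriveE // {1}(row_sum_delta v) linear_sum /dotp.
by apply: eq_bigr => i _; rewrite linearZ /= mxE -deriveE // mulrC.
Qed.

Lemma is_derive_line x v s :
  is_derive s (1 : R) (fun r : R => f (x + r *: v)) (dotp (g (x + s *: v)) v).
Proof.
have incr : (fun h : R => h^-1 *: (((fun r => f (x + r *: v)) \o shift s) (h *: 1)
                                   - f (x + s *: v)))
          = (fun h : R => h^-1 *: ((f \o shift (x + s *: v)) (h *: v) - f (x + s *: v))).
  by apply: funext => h /=; rewrite scaler1 scalerDl addrCA addrA.
have dv : derivable f (x + s *: v) v by exact: diff_derivable.
split; first by rewrite /derivable incr.
by rewrite /derive incr -/(derive f (x + s *: v) v) derive_grad.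
Qed.

Lemma is_derive_line0 x v : is_derive (0 : R) (1 : R) (fun r : R => f (x + r *: v)) (dotp (g x) v).
Proof. by have := is_derive_line x v 0; rewrite scale0r addr0. Qed.

Lemma argmin_grad_ge0 X xs z : convex_set X -> argmin_on X f xs -> X z ->
  0 <= dotp (g xs) (z - xs).
Proof.
move=> cX [Xxs xs_min] Xz; apply: (derive0_ge_slope (is_derive_line0 _ _)) => s /andP[s0 s1].
rewrite mul0r scale0r addr0 subr_ge0 segment_pointE; apply/xs_min/(convex_set_comb cX Xz Xxs).
by rewrite (ltW s0) (ltW s1).
Qed.

Lemma convex_grad_le x y : convex_fun f -> f x + dotp (g x) (y - x) <= f y.
Proof.
move=> fc; suff : dotp (g x) (y - x) <= f y - f x by lra.
apply: (derive0_le_slope (is_derive_line0 _ _)) => s /andP[s0 s1].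
rewrite scale0r addr0 segment_pointE; have := fc y x s; rewrite s0 s1 => /(_ isT); lra.
Qed.

Variable L : R.
Hypotheses (L0 : 0 < L) (Ls : L_smooth L f).

Lemma L_smooth_dotp x y : dotp (g x - g y) (g x - g y) <= L ^+ 2 * dotp (x - y) (x - y).
Proof.
by rewrite -!enorm_sqr -exprMn ler_sqr ?nnegrE ?mulr_ge0 ?enorm_ge0 ?(ltW L0) //; exact: Ls.
Qed.

Lemma smooth_descent x y : f y <= f x + dotp (g x) (y - x) + L / 2 * dotp (y - x) (y - x).
Proof.
set v := y - x.
suff : f (x + 1 *: v) - f (x + 0 *: v) <= dotp (g x) v + L * dotp v v / 2.
  by rewrite scale1r scale0r addr0 /v addrCA subrr addr0; lra.
apply: (increment_le_of_derive_affine (is_derive_line x v)) => s /andP[s0 s1].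
set D := g (x + s *: v) - g x.
(* AM-GM with weight [L s] turns the smoothness bound on [|D|] into [<D, v> <= L s |v|^2] *)
have sm : dotp D D <= (L * s) ^+ 2 * dotp v v.
  by have := L_smooth_dotp (x + s *: v) x; rewrite addrAC subrr add0r dotpZl dotpZr; nra.
have := dotp_amgm (L * s) D v; rewrite dotpBl.
have Ls0 : 0 < L * s by rewrite mulr_gt0.
have vv := dotpp_ge0 v.
nra.
Qed.

Hypothesis fc : convex_fun f.

Lemma smooth_convex_gap x y :
  f x + dotp (g x) (y - x) + dotp (g y - g x) (g y - g x) / (2 * L) <= f y.
Proof.
set D := g y - g x; set z := y - L^-1 *: D.
(* compare [f] at [x] and [y] through the gradient step [z] from [y] *)
have cvx := convex_grad_le x z fc.
have desc := smooth_descent y z.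
have zx : z - x = (y - x) - L^-1 *: D by rewrite /z addrAC.
have zy : z - y = - (L^-1 *: D) by rewrite /z addrAC subrr add0r.
rewrite zx dotpBr dotpZr in cvx.
rewrite zy !(dotpNl, dotpNr, dotpZl, dotpZr, opprK) in desc.
have LD : L^-1 * dotp (g y) D - L^-1 * dotp (g x) D = L^-1 * dotp D D.
  by rewrite -mulrBr -dotpBl.
have L_neq0 : L != 0 by rewrite gt_eqF.
have E1 : L / 2 * (L^-1 * (L^-1 * dotp D D)) = L^-1 * dotp D D / 2 by field.
have E2 : dotp D D / (2 * L) = L^-1 * dotp D D / 2 by field.
lra.
Qed.

Lemma grad_cocoercive x y :
  dotp (g x - g y) (g x - g y) / L <= dotp (g x - g y) (x - y).
Proof.
have gap_xy := smooth_convex_gap x y; have gap_yx := smooth_convex_gap y x.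
have DD : dotp (g y - g x) (g y - g x) = dotp (g x - g y) (g x - g y).
  by rewrite -opprB dotpNl dotpNr opprK.
have split : dotp (g x - g y) (x - y) = - dotp (g x) (y - x) - dotp (g y) (x - y).
  by rewrite !(dotpBl, dotpBr); ring.
have L_neq0 : L != 0 by rewrite gt_eqF.
have E : dotp (g x - g y) (g x - g y) / (2 * L) * 2 = dotp (g x - g y) (g x - g y) / L.
  by field.
rewrite DD in gap_xy gap_yx; lra.
Qed.

End Gradient.

Section LocalLMO.
Variables (R : realType) (d : nat) (X : set 'rV[R]_d) (f : 'rV[R]_d -> R) (L : R).
Variable xs : 'rV[R]_d.
Hypotheses (cX : convex_set X) (fd : forall x, differentiable f x) (L0 : 0 < L)
  (Ls : L_smooth L f) (fc : convex_fun f) (xs_min : argmin_on X f xs).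
Local Notation g := (grad f).

Lemma local_lmo_dist_decrease xk p :
  argmin_on (X `&` eball xk (enorm (g xk - g xs) / L)) (dotp (g xk)) p ->
  enorm (p - xs) ^+ 2 <= enorm (xk - xs) ^+ 2 - (enorm (g xk - g xs) / L) ^+ 2.
Proof.
move=> [[Xp p_ball] p_min]; rewrite !enorm_sqr.
set h := g xk - g xs in p_ball p_min *; set t := enorm h / L in p_ball p_min *.
have t0 : 0 <= t by rewrite divr_ge0 ?enorm_ge0 ?ltW.
have tt : t ^+ 2 = L^-1 ^+ 2 * dotp h h by rewrite expr_div_n enorm_sqr mulrC exprVn.
move: p_ball; rewrite /eball /= enorm_le_sqr // => p_ball.
have [xs_better | p_better] := ltP (dotp (g xk) (xs - p)) 0.
- (* every point of [X] strictly between [p] and [xs] beats [p], so it lies outside the ball *)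
  have -> : p - xs = (p - xk) - (xs - xk) by rewrite opprB addrA subrK.
  have -> : xk - xs = - (xs - xk) by rewrite opprB.
  rewrite dotpNl dotpNr opprK; apply: segment_exit_ball => // l /andP[l0 l1].
  rewrite ltNge; apply/negP => z_ball.
  have z_eq : p + l *: (xs - p) - xk = p - xk + l *: (xs - xk - (p - xk)).
    by rewrite opprB addrA subrK addrAC.
  have Xz : X (p + l *: (xs - p)).
    by rewrite segment_pointE; apply: (convex_set_comb cX xs_min.1 Xp); rewrite (ltW l0) l1.
  have := p_min _ (conj Xz _); rewrite /eball /= enorm_le_sqr // z_eq => /(_ z_ball).
  rewrite dotpDr dotpZr; have : 0 < l * - dotp (g xk) (xs - p) by rewrite mulr_gt0 ?oppr_gt0.
  lra.
- (* otherwise co-coercivity forces [p = xk - h / L] *)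
  have coco := grad_cocoercive fd L0 Ls fc xk xs; rewrite -/h in coco.
  have xs_opt := argmin_grad_ge0 fd cX xs_min Xp.
  have step : xk - p = L^-1 *: h.
    apply: cauchy_schwarz_eq; first by rewrite invr_ge0 ltW.
      by rewrite -tt -opprB dotpNl dotpNr opprK.
    have -> : dotp h (xk - p) = dotp h (xk - xs) + dotp (g xk) (xs - p) + dotp (g xs) (p - xs).
      by rewrite /h !(dotpBl, dotpBr); ring.
    by rewrite mulrC; lra.
  have -> : p - xs = (xk - xs) - (xk - p) by apply/rowP => i; rewrite !mxE; ring.
  rewrite step dotp_sqrBZ tt dotpC.
  have : L^-1 * (L^-1 * dotp h h) <= L^-1 * dotp h (xk - xs).
    by rewrite ler_pM2l ?invr_gt0 // mulrC.
  lra.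
Qed.
End LocalLMO.

Unset Implicit Arguments.

Theorem theorem2 (R : realType) (d : nat) (X : set 'rV[R]_d)
  (f : 'rV[R]_d -> R) (L : R) (x : nat -> 'rV[R]_d) (xstar : 'rV[R]_d) :
  X !=set0 -> closed X -> convex_set X ->
  (forall y, differentiable f y) -> 0 < L -> L_smooth L f -> strictly_convex f ->
  argmin_on X f !=set0 ->
  X (x 0%N) -> argmin_on X f xstar ->
  (forall k : nat,
     argmin_on (X `&` eball (x k) (enorm (grad f (x k) - grad f xstar) / L))
               (fun z => dotp (grad f (x k)) z) (x k.+1)) ->
  forall K : nat, (1 <= K)%N ->
    let a := fun k : nat => enorm (grad f (x k) - grad f xstar) ^+ 2 in
    \big[Num.min/a 0%N]_(k < K) a k <= K%:R^-1 * \sum_(k < K) a k /\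
    K%:R^-1 * \sum_(k < K) a k <= L ^+ 2 * enorm (x 0%N - xstar) ^+ 2 / K%:R.
Proof.
move=> _ _ cX fd L0 Ls /strictly_convex_convex fc _ _ xs_min lmo K K1 a.
pose b k := L ^+ 2 * enorm (x k - xstar) ^+ 2.
have step k : a k <= b k - b k.+1.
  have := local_lmo_dist_decrease cX fd L0 Ls fc xs_min (lmo k).
  have La : L ^+ 2 * (enorm (grad f (x k) - grad f xstar) / L) ^+ 2 = a k.
    by rewrite expr_div_n mulrCA mulfV ?mulr1 // expf_neq0 // gt_eqF.
  by rewrite -La /b -mulrBr ler_pM2l ?exprn_gt0 //; lra.
have sum_le : \sum_(k < K) a k <= b 0%N.
  have bK : 0 <= b K by rewrite mulr_ge0 ?sqr_ge0.
  by have := sum_le_telescope K step; lra.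
split; first exact: bigmin_le_mean.
by rewrite mulrC ler_wpM2r // invr_ge0 ler0n.
Qed.
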